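(* Let $(m_j)_{j=1}^{\infty}$ be a strictly increasing sequence of positive integers with $m_{j+1}\ge q\,m_j$ for all $j$, where $q\ge 2$. Let $A_j>0$, $B_j\in\mathbb{C}$ with $A_j^2-|B_j|^2=1$. For $N\in\mathbb{N}$ define trigonometric polynomials $a_N,b_N$ by $$\begin{bmatrix} a_N(t) & b_N(t)\\ \overline{b_N(t)} & \overline{a_N(t)}\end{bmatrix}=\prod_{j=1}^{N}\begin{bmatrix} A_j & B_j e^{2\pi i m_j t}\\ \overline{B_j}e^{-2\pi i m_j t} & A_j\end{bmatrix}$$ (factors in increasing order of $j$ from left to right). Then (a) $\displaystyle\int_{\mathbb{T}}\big(|a_N(t)|^2+|b_N(t)|^2\big)\,dt=\prod_{j=1}^{N}(A_j^2+|B_j|^2)$; (b) $\displaystyle\int_{\mathbb{T}}\big(|a_N(t)-A_1\cdots A_N|^2+|b_N(t)|^2\big)\,dt=\prod_{j=1}^{N}(A_j^2+|B_j|^2)-\prod_{j=1}^{N}A_j^2$.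
   Context: $\mathbb{T}=\mathbb{R}/\mathbb{Z}$ with Lebesgue measure. *)

From Stdlib Require Import Reals.
From Coquelicot Require Import Coquelicot.
Open Scope R_scope.

Definition expi (theta : R) : C := (cos theta, sin theta).

Record M2 := mkM2 { m11 : C; m12 : C; m21 : C; m22 : C }.

Definition M2id : M2 := mkM2 1%C 0%C 0%C 1%C.

Definition M2mul (X Y : M2) : M2 :=
  mkM2 (m11 X * m11 Y + m12 X * m21 Y)%C (m11 X * m12 Y + m12 X * m22 Y)%C
       (m21 X * m11 Y + m22 X * m21 Y)%C (m21 X * m12 Y + m22 X * m22 Y)%C.

Definition factor (m : nat -> nat) (A : nat -> R) (B : nat -> C) (j : nat) (t : R) : M2 :=
  mkM2 (RtoC (A j)) (B j * expi (2 * PI * INR (m j) * t))%C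
       (Cconj (B j) * expi (- (2 * PI * INR (m j) * t)))%C (RtoC (A j)).

Fixpoint Mprod (m : nat -> nat) (A : nat -> R) (B : nat -> C) (N : nat) (t : R) : M2 :=
  match N with
  | O => M2id
  | S n => M2mul (Mprod m A B n t) (factor m A B (S n) t)
  end.

Definition a_N m A B N t : C := m11 (Mprod m A B N t).
Definition b_N m A B N t : C := m12 (Mprod m A B N t).

Fixpoint prodR (f : nat -> R) (N : nat) : R :=
  match N with
  | O => 1
  | S n => prodR f n * f (S n)
  end.

From Stdlib Require Import Reals Lia ZArith List Nsatz Lra.
From Coquelicot Require Import Coquelicot.
Open Scope R_scope.

(* a_N and b_N are trigonometric polynomials with frequencies in (-m_N, 0] and
   [1, m_N].  Multiplying by the next factor gives
     |a_{N+1}|^2 + |b_{N+1}|^2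
       = (A^2 + |B|^2) (|a_N|^2 + |b_N|^2) + 4 A Re (B e^{2 pi i m_{N+1} t} a_N conj b_N),
   and since m_{N+1} >= 2 m_N the cross term has no frequency 0, so it integrates
   to 0; (a) follows by induction.  For (b), expand |a_N - A_1...A_N|^2: the
   integral of Re a_N is its constant coefficient, which is A_1...A_N because the
   b_N-part of a_{N+1} lives at negative frequencies. *)

Lemma expi_add x y : expi (x + y) = (expi x * expi y)%C.
Proof. unfold expi, Cmult; simpl. rewrite cos_plus, sin_plus. f_equal; ring. Qed.

Lemma expi_opp x : expi (- x) = Cconj (expi x).
Proof. unfold expi, Cconj; simpl. rewrite cos_neg, sin_neg. reflexivity. Qed.

Lemma expi_2PI_IZR k : expi (2 * PI * IZR k) = 1%C.
Proof.
  assert (Hsin : forall x, sin (IZR x * PI) = 0) by (intros x; apply sin_eq_0_1; eauto).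
  unfold expi, RtoC. f_equal.
  - replace (2 * PI * IZR k) with (2 * (IZR k * PI)) by ring.
    rewrite cos_2a_sin, Hsin. ring.
  - replace (2 * PI * IZR k) with (IZR (2 * k) * PI) by (rewrite mult_IZR; ring).
    apply Hsin.
Qed.

Definition monomial (k : Z) (t : R) : C := expi (2 * PI * IZR k * t).

Lemma monomial_0 t : monomial 0 t = 1%C.
Proof.
  unfold monomial, expi. rewrite Rmult_0_r, Rmult_0_l, cos_0, sin_0. reflexivity.
Qed.

Lemma monomial_add k l t : monomial (k + l) t = (monomial k t * monomial l t)%C.
Proof.
  unfold monomial. rewrite plus_IZR, <- expi_add. f_equal. ring.
Qed.

Lemma monomial_opp k t : monomial (- k) t = Cconj (monomial k t).
Proof.
  unfold monomial. rewrite opp_IZR, <- expi_opp. f_equal. ring.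
Qed.

(* Frequencies may repeat in the list; [tp_coef0] adds up all coefficients of
   frequency 0. *)
Definition trigpoly := list (Z * C).

Fixpoint tp_eval (p : trigpoly) (t : R) : C :=
  match p with
  | nil => 0%C
  | (k, c) :: p' => (c * monomial k t + tp_eval p' t)%C
  end.

Fixpoint tp_coef0 (p : trigpoly) : C :=
  match p with
  | nil => 0%C
  | (k, c) :: p' => if Z.eq_dec k 0 then (c + tp_coef0 p')%C else tp_coef0 p'
  end.

Definition tp_scale (z : C) (p : trigpoly) : trigpoly :=
  map (fun kc => (fst kc, z * snd kc)%C) p.

Definition tp_mulmono (k : Z) (c : C) (p : trigpoly) : trigpoly :=
  map (fun ld => ((k + fst ld)%Z, (c * snd ld)%C)) p.

Fixpoint tp_mul (p q : trigpoly) : trigpoly :=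
  match p with
  | nil => nil
  | (k, c) :: p' => tp_mulmono k c q ++ tp_mul p' q
  end.

Definition tp_conj (p : trigpoly) : trigpoly :=
  map (fun kc => ((- fst kc)%Z, Cconj (snd kc))) p.

Definition spectrum_in (P : Z -> Prop) (p : trigpoly) : Prop :=
  List.Forall (fun kc => P (fst kc)) p.

Lemma tp_eval_app p q t : tp_eval (p ++ q) t = (tp_eval p t + tp_eval q t)%C.
Proof. induction p as [|[k c] p IH]; simpl; [|rewrite IH]; ring. Qed.

Lemma tp_eval_scale z p t : tp_eval (tp_scale z p) t = (z * tp_eval p t)%C.
Proof. induction p as [|[k c] p IH]; simpl; [|rewrite IH]; ring. Qed.

Lemma tp_eval_mulmono k c p t :
  tp_eval (tp_mulmono k c p) t = (c * monomial k t * tp_eval p t)%C.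
Proof.
  induction p as [|[l d] p IH]; simpl; [|rewrite IH, monomial_add]; ring.
Qed.

Lemma tp_eval_mul p q t : tp_eval (tp_mul p q) t = (tp_eval p t * tp_eval q t)%C.
Proof.
  induction p as [|[k c] p IH]; simpl; [|rewrite tp_eval_app, tp_eval_mulmono, IH]; ring.
Qed.

Lemma tp_eval_conj p t : tp_eval (tp_conj p) t = Cconj (tp_eval p t).
Proof.
  induction p as [|[k c] p IH]; simpl.
  - unfold Cconj, RtoC; simpl. f_equal; ring.
  - rewrite IH, monomial_opp, Cplus_conj, Cmult_conj. reflexivity.
Qed.

Lemma tp_coef0_app p q : tp_coef0 (p ++ q) = (tp_coef0 p + tp_coef0 q)%C.
Proof. induction p as [|[k c] p IH]; simpl; [|destruct Z.eq_dec; rewrite IH]; ring. Qed.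

Lemma tp_coef0_scale z p : tp_coef0 (tp_scale z p) = (z * tp_coef0 p)%C.
Proof. induction p as [|[k c] p IH]; simpl; [|destruct Z.eq_dec; rewrite IH]; ring. Qed.

Lemma tp_coef0_spectrum_nonzero p :
  spectrum_in (fun k => k <> 0%Z) p -> tp_coef0 p = 0%C.
Proof.
  induction 1 as [|[k c] p Hk _ IH]; simpl in *; [reflexivity|].
  destruct Z.eq_dec; [contradiction | exact IH].
Qed.

Lemma spectrum_in_impl (P Q : Z -> Prop) p :
  spectrum_in P p -> (forall k, P k -> Q k) -> spectrum_in Q p.
Proof. intros Hp HPQ. eapply Forall_impl; [|exact Hp]. intros kc. apply HPQ. Qed.

Lemma spectrum_in_app P p q :
  spectrum_in P p -> spectrum_in P q -> spectrum_in P (p ++ q).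
Proof. intros Hp Hq. apply Forall_app; split; assumption. Qed.

Lemma spectrum_in_scale P z p : spectrum_in P p -> spectrum_in P (tp_scale z p).
Proof. intros Hp. unfold spectrum_in, tp_scale. rewrite Forall_map. exact Hp. Qed.

Lemma spectrum_in_mulmono (P Q : Z -> Prop) k c p :
  spectrum_in P p -> (forall l, P l -> Q (k + l)%Z) -> spectrum_in Q (tp_mulmono k c p).
Proof.
  intros Hp HPQ. unfold spectrum_in, tp_mulmono. rewrite Forall_map.
  eapply Forall_impl; [|exact Hp]. intros kc. apply HPQ.
Qed.

Lemma spectrum_in_mul (P Q S : Z -> Prop) p q :
  spectrum_in P p -> spectrum_in Q q ->
  (forall k l, P k -> Q l -> S (k + l)%Z) -> spectrum_in S (tp_mul p q).
Proof.
  intros Hp Hq HS. induction Hp as [|[k c] p Hk _ IH]; simpl; [constructor|].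
  apply spectrum_in_app; [|exact IH].
  apply (spectrum_in_mulmono Q); [exact Hq|]. intros l. exact (HS k l Hk).
Qed.

Lemma spectrum_in_conj (P : Z -> Prop) p :
  spectrum_in P p -> spectrum_in (fun k => P (- k)%Z) (tp_conj p).
Proof.
  intros Hp. unfold spectrum_in, tp_conj. rewrite Forall_map.
  eapply Forall_impl; [|exact Hp]. intros [k c]. simpl. rewrite Z.opp_involutive. auto.
Qed.

Lemma is_RInt_const_01 (v : R) : is_RInt (fun _ => v) 0 1 v.
Proof.
  assert (H := is_RInt_const 0 1 v).
  unfold scal in H; simpl in H; unfold mult in H; simpl in H.
  rewrite Rminus_0_r, Rmult_1_l in H. exact H.
Qed.

Lemma is_RInt_Rext (f g : R -> R) a b l :
  (forall t, f t = g t) -> is_RInt f a b l -> is_RInt g a b l.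
Proof. intros Hfg. apply is_RInt_ext. intros t _. apply Hfg. Qed.

Lemma is_RInt_Rplus (f g : R -> R) a b If Ig :
  is_RInt f a b If -> is_RInt g a b Ig -> is_RInt (fun t => f t + g t) a b (If + Ig).
Proof. exact (is_RInt_plus (V := R_NormedModule) f g a b If Ig). Qed.

Lemma is_RInt_Rscal (f : R -> R) k a b If :
  is_RInt f a b If -> is_RInt (fun t => k * f t) a b (k * If).
Proof. exact (is_RInt_scal (V := R_NormedModule) f a b k If). Qed.

Lemma is_RInt_Re_monomial k c :
  k <> 0%Z -> is_RInt (fun t => Re (c * monomial k t)%C) 0 1 0.
Proof.
  intros Hk. set (w := 2 * PI * IZR k).
  assert (Hw : w <> 0).
  { unfold w. apply Rmult_integral_contrapositive_currified; [|apply not_0_IZR, Hk].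
    pose proof PI_RGT_0. lra. }
  set (F t := (Re c * sin (w * t) + Im c * cos (w * t)) / w).
  assert (Hperiod : F 1 = F 0).
  { assert (E := expi_2PI_IZR k). unfold expi in E. injection E as Hcos Hsin.
    unfold F. rewrite Rmult_1_r, Rmult_0_r, sin_0, cos_0. fold w in Hcos, Hsin.
    rewrite Hcos, Hsin. reflexivity. }
  replace 0 with (minus (F 1) (F 0)) at 2
    by (rewrite Hperiod; unfold minus, plus, opp; simpl; ring).
  eapply is_RInt_Rext;
    [|apply (is_RInt_derive F (fun t => Re c * cos (w * t) - Im c * sin (w * t)))].
  - intros t. unfold monomial, expi, Re, Im, Cmult. simpl. fold w. ring.
  - intros t _. unfold F. auto_derive; [auto|]. field. exact Hw.
  - intros t _. apply (ex_derive_continuous (K := R_AbsRing) (V := R_NormedModule)).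
    auto_derive. auto.
Qed.

Lemma is_RInt_Re_tp_eval p :
  is_RInt (fun t => Re (tp_eval p t)) 0 1 (Re (tp_coef0 p)).
Proof.
  induction p as [|[k c] p IH]; cbn [tp_eval tp_coef0].
  - apply is_RInt_const_01.
  - eapply is_RInt_Rext; [intros t; rewrite re_plus; reflexivity|].
    destruct Z.eq_dec as [->|Hk].
    + rewrite re_plus. apply is_RInt_Rplus; [|exact IH].
      eapply is_RInt_Rext; [|apply is_RInt_const_01].
      intros t. rewrite monomial_0, Cmult_1_r. reflexivity.
    + rewrite <- (Rplus_0_l (Re (tp_coef0 p))).
      apply is_RInt_Rplus; [apply is_RInt_Re_monomial, Hk | exact IH].
Qed.

Lemma Cmod2_row_mul_factor (A : R) (B a b : C) (x : R) :
  Cmod (a * RtoC A + b * (Cconj B * expi (- x)))%C ^ 2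
    + Cmod (a * (B * expi x) + b * RtoC A)%C ^ 2
  = (A ^ 2 + Cmod B ^ 2) * (Cmod a ^ 2 + Cmod b ^ 2)
    + 4 * A * Re (B * expi x * (a * Cconj b))%C.
Proof.
  rewrite !Cmod2_alt, expi_opp.
  assert (Hx := sin2_cos2 x). unfold Rsqr in Hx.
  destruct a as [a1 a2], b as [b1 b2], B as [B1 B2].
  unfold expi, Cconj, Cmult, Cplus, RtoC, Re, Im in *; simpl.
  nsatz.
Qed.

Lemma Cmod2_sub_RtoC (z : C) (x : R) :
  Cmod (z - RtoC x)%C ^ 2 = Cmod z ^ 2 - 2 * x * Re z + x ^ 2.
Proof.
  rewrite !Cmod2_alt. destruct z as [u v].
  unfold Cminus, Copp, Cplus, RtoC, Re, Im; simpl. ring.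
Qed.

Lemma prodR_pow2 (A : nat -> R) N : prodR (fun j => A j ^ 2) N = prodR A N ^ 2.
Proof. induction N as [|N IH]; cbn [prodR]; [|rewrite IH]; ring. Qed.

Lemma lacunary_nat q a b : 2 <= q -> q * INR a <= INR b -> (2 * a <= b)%nat.
Proof.
  intros Hq Hab. apply INR_le. rewrite mult_INR.
  pose proof (pos_INR a). simpl (INR 2). nra.
Qed.

Section ProductEntries.
Variables (m : nat -> nat) (A : nat -> R) (B : nat -> C).

Definition freq (j : nat) : Z := Z.of_nat (m j).

Lemma monomial_freq j t : monomial (freq j) t = expi (2 * PI * INR (m j) * t).
Proof. unfold monomial, freq. rewrite <- INR_IZR_INZ. reflexivity. Qed.

Fixpoint ab_poly (n : nat) : trigpoly * trigpoly :=
  match n with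
  | O => ((0%Z, RtoC 1) :: nil, nil)
  | S n' =>
      (tp_scale (A n) (fst (ab_poly n'))
         ++ tp_mulmono (- freq n) (Cconj (B n)) (snd (ab_poly n')),
       tp_mulmono (freq n) (B n) (fst (ab_poly n'))
         ++ tp_scale (A n) (snd (ab_poly n')))
  end.

Lemma ab_poly_eval n t :
  a_N m A B n t = tp_eval (fst (ab_poly n)) t /\
  b_N m A B n t = tp_eval (snd (ab_poly n)) t.
Proof.
  unfold a_N, b_N. induction n as [|n [Ha Hb]]; simpl.
  - rewrite monomial_0. split; [ring | reflexivity].
  - rewrite Ha, Hb, !tp_eval_app, !tp_eval_scale, !tp_eval_mulmono,
      monomial_opp, monomial_freq, expi_opp.
    split; ring.
Qed.

Definition cross_poly (n : nat) : trigpoly :=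
  tp_mulmono (freq (S n)) (B (S n))
    (tp_mul (fst (ab_poly n)) (tp_conj (snd (ab_poly n)))).

Definition energy (n : nat) (t : R) : R :=
  Cmod (a_N m A B n t) ^ 2 + Cmod (b_N m A B n t) ^ 2.

Lemma energy_succ n t :
  energy (S n) t = (A (S n) ^ 2 + Cmod (B (S n)) ^ 2) * energy n t
                   + 4 * A (S n) * Re (tp_eval (cross_poly n) t).
Proof.
  destruct (ab_poly_eval n t) as [Ea Eb].
  unfold energy, cross_poly. unfold a_N, b_N in *. cbn [Mprod].
  unfold M2mul, factor. cbn [m11 m12 m21 m22].
  rewrite Cmod2_row_mul_factor, tp_eval_mulmono, tp_eval_mul, tp_eval_conj,
    <- Ea, <- Eb, monomial_freq.
  reflexivity.
Qed.

Hypothesis m_pos : forall j, (1 <= j)%nat -> (0 < m j)%nat.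
Hypothesis m_lacunary : forall j, (1 <= j)%nat -> (2 * m j <= m (S j))%nat.

(* [m 0] is unconstrained; at [n = 0] the bound only has to accommodate [a_0 = 1]. *)
Definition freq_bound (n : nat) : Z := match n with O => 1%Z | S _ => freq n end.

Lemma freq_bound_le n : (freq_bound n <= freq (S n))%Z.
Proof.
  destruct n as [|n]; unfold freq_bound, freq.
  - specialize (m_pos 1). lia.
  - specialize (m_lacunary (S n)). lia.
Qed.

Lemma freq_lt_succ n : (1 <= n)%nat -> (freq n < freq (S n))%Z.
Proof.
  intros Hn. unfold freq. specialize (m_pos n Hn). specialize (m_lacunary n Hn). lia.
Qed.

Lemma ab_poly_spectrum n :
  spectrum_in (fun k => - freq_bound n < k <= 0)%Z (fst (ab_poly n)) /\
  spectrum_in (fun k => 1 <= k <= freq_bound n)%Z (snd (ab_poly n)).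
Proof.
  induction n as [|n [Ha Hb]].
  - split; repeat constructor; simpl; lia.
  - pose proof (freq_bound_le n) as Hle.
    change (freq_bound (S n)) with (freq (S n)). cbn [ab_poly fst snd].
    split; apply spectrum_in_app.
    + apply spectrum_in_scale. apply (spectrum_in_impl _ _ _ Ha). lia.
    + apply (spectrum_in_mulmono _ _ _ _ _ Hb). lia.
    + apply (spectrum_in_mulmono _ _ _ _ _ Ha). lia.
    + apply spectrum_in_scale. apply (spectrum_in_impl _ _ _ Hb). lia.
Qed.

Lemma tp_coef0_a_poly n : tp_coef0 (fst (ab_poly n)) = RtoC (prodR A n).
Proof.
  induction n as [|n IH]; [simpl; f_equal; ring|].
  cbn [ab_poly fst].
  rewrite tp_coef0_app, tp_coef0_scale, IH, (tp_coef0_spectrum_nonzero _).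
  - unfold RtoC, Cplus, Cmult. simpl. f_equal; ring.
  - destruct n as [|n]; [constructor|].
    destruct (ab_poly_spectrum (S n)) as [_ Hb].
    pose proof (freq_lt_succ (S n) ltac:(lia)).
    apply (spectrum_in_mulmono _ _ _ _ _ Hb). simpl. lia.
Qed.

Lemma cross_poly_spectrum n : spectrum_in (fun k => k <> 0%Z) (cross_poly n).
Proof.
  destruct n as [|n]; [constructor|].
  destruct (ab_poly_spectrum (S n)) as [Ha Hb].
  change (freq_bound (S n)) with (freq (S n)) in Ha, Hb.
  assert (Hlac : (2 * freq (S n) <= freq (S (S n)))%Z)
    by (unfold freq; specialize (m_lacunary (S n)); lia).
  apply (spectrum_in_mulmono (fun k => - 2 * freq (S n) < k <= -1)%Z); [|lia].
  apply (spectrum_in_mul _ _ _ _ _ Ha (spectrum_in_conj _ _ Hb)). lia.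
Qed.

Lemma is_RInt_energy n :
  is_RInt (energy n) 0 1 (prodR (fun j => A j ^ 2 + Cmod (B j) ^ 2) n).
Proof.
  induction n as [|n IH].
  - eapply is_RInt_Rext; [|apply is_RInt_const_01].
    intros t. unfold energy, a_N, b_N. simpl. rewrite Cmod_1, Cmod_0. ring.
  - eapply is_RInt_Rext; [intros t; symmetry; exact (energy_succ n t)|].
    replace (prodR _ (S n))
      with ((A (S n) ^ 2 + Cmod (B (S n)) ^ 2) * prodR (fun j => A j ^ 2 + Cmod (B j) ^ 2) n
            + 4 * A (S n) * Re (tp_coef0 (cross_poly n)))
      by (rewrite (tp_coef0_spectrum_nonzero _ (cross_poly_spectrum n)); simpl; ring).
    apply is_RInt_Rplus; apply is_RInt_Rscal; [exact IH | apply is_RInt_Re_tp_eval].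
Qed.

Lemma is_RInt_Re_a_N n : is_RInt (fun t => Re (a_N m A B n t)) 0 1 (prodR A n).
Proof.
  eapply is_RInt_Rext; [intros t; rewrite (proj1 (ab_poly_eval n t)); reflexivity|].
  replace (prodR A n) with (Re (tp_coef0 (fst (ab_poly n))))
    by (rewrite tp_coef0_a_poly; reflexivity).
  apply is_RInt_Re_tp_eval.
Qed.

End ProductEntries.

Theorem lemma2p2 (q : R) (m : nat -> nat) (A : nat -> R) (B : nat -> C) :
  2 <= q ->
  (forall j, (1 <= j)%nat -> (0 < m j)%nat) ->
  (forall j, (1 <= j)%nat -> (m j < m (S j))%nat) ->
  (forall j, (1 <= j)%nat -> q * INR (m j) <= INR (m (S j))) ->
  (forall j, (1 <= j)%nat -> 0 < A j) ->
  (forall j, (1 <= j)%nat -> A j ^ 2 - Cmod (B j) ^ 2 = 1) ->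
  forall N : nat,
    RInt (fun t => Cmod (a_N m A B N t) ^ 2 + Cmod (b_N m A B N t) ^ 2) 0 1
      = prodR (fun j => A j ^ 2 + Cmod (B j) ^ 2) N
    /\
    RInt (fun t => Cmod (a_N m A B N t - RtoC (prodR A N))%C ^ 2
                   + Cmod (b_N m A B N t) ^ 2) 0 1
      = prodR (fun j => A j ^ 2 + Cmod (B j) ^ 2) N
        - prodR (fun j => A j ^ 2) N.
Proof.
  intros Hq m_pos _ Hgrowth _ _ N.
  assert (m_lacunary : forall j, (1 <= j)%nat -> (2 * m j <= m (S j))%nat)
    by (intros j Hj; exact (lacunary_nat q _ _ Hq (Hgrowth j Hj))).
  pose proof (is_RInt_energy m A B m_pos m_lacunary N) as Henergy.
  split; apply is_RInt_unique; [exact Henergy|].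
  apply (is_RInt_Rext (fun t => energy m A B N t
    + -2 * prodR A N * Re (a_N m A B N t) + prodR A N ^ 2)).
  { intros t. unfold energy. rewrite Cmod2_sub_RtoC. ring. }
  replace (prodR _ N - _ : R)
    with (prodR (fun j => A j ^ 2 + Cmod (B j) ^ 2) N
          + -2 * prodR A N * prodR A N + prodR A N ^ 2)
    by (rewrite prodR_pow2; ring).
  apply is_RInt_Rplus; [apply is_RInt_Rplus|apply is_RInt_const_01].
  - exact Henergy.
  - apply is_RInt_Rscal, (is_RInt_Re_a_N m A B m_pos m_lacunary).
Qed.
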